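(* Let $|q|<1$ and let $(\alpha_n(a,k,q),\beta_n(a,k,q))$ be a WP-Bailey pair. Assume $|qa|<|z|$, that no denominator vanishes, and that all series below converge absolutely. Then \begin{multline*} \sum_{n=1}^{\infty} \frac{(q\sqrt{k},-q\sqrt{k},z;q)_{n}(q;q)_{n-1}}{(\sqrt{k},-\sqrt{k}, q k,q k/z;q)_{n}}\left( \frac{q a}{ z }\right)^{n} \beta_n(a,k,q) - \sum_{n=1}^{\infty}\frac{(z;q)_{n}(q;q)_{n-1}}{(q a ,q a/z;q)_n}\left (\frac{q a}{z}\right)^{n}\alpha_n(a,k,q)\\ =\sum_{n=1}^{\infty} \frac{(q\sqrt{k},-q\sqrt{k},k,z,k/a;q)_{n}}{(\sqrt{k},-\sqrt{k}, q k,q k/z,q a;q)_{n}(1-q^n)}\left( \frac{q a}{z }\right )^{n}. \end{multline*}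
   Context: Notation: $(x;q)_n=(1-x)(1-xq)\cdots(1-xq^{n-1})$, $(x;q)_0=1$, $(x;q)_\infty=\prod_{j\ge0}(1-xq^j)$, and $(x_1,\dots,x_m;q)_n=(x_1;q)_n\cdots(x_m;q)_n$. A WP-Bailey pair (with parameters $a,k$ and base $q$) is a pair of sequences $(\alpha_n(a,k,q),\beta_n(a,k,q))_{n\ge0}$ with $\alpha_0=\beta_0=1$ and, for $n>0$, $$\beta_n(a,k,q)=\sum_{j=0}^{n}\frac{(k/a;q)_{n-j}(k;q)_{n+j}}{(q;q)_{n-j}(aq;q)_{n+j}}\alpha_j(a,k,q).$$ *)

From Stdlib Require Import Reals.
Open Scope R_scope.

Definition CC : Type := (R * R)%type.
Definition RtoC (x : R) : CC := (x, 0).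
Definition Czero : CC := (0, 0).
Definition Cone : CC := (1, 0).
Definition Cadd (z w : CC) : CC := (fst z + fst w, snd z + snd w).
Definition Copp (z : CC) : CC := (- fst z, - snd z).
Definition Csub (z w : CC) : CC := Cadd z (Copp w).
Definition Cmul (z w : CC) : CC :=
  (fst z * fst w - snd z * snd w, fst z * snd w + snd z * fst w).
Definition Cinv (z : CC) : CC :=
  (fst z / (fst z ^ 2 + snd z ^ 2), - snd z / (fst z ^ 2 + snd z ^ 2)).
Definition Cdiv (z w : CC) : CC := Cmul z (Cinv w).
Definition Cnorm (z : CC) : R := sqrt (fst z ^ 2 + snd z ^ 2).
Fixpoint Cpow (z : CC) (n : nat) : CC :=
  match n with O => Cone | S m => Cmul (Cpow z m) z end.

Fixpoint Cpartial (f : nat -> CC) (n : nat) : CC :=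
  match n with O => Czero | S m => Cadd (Cpartial f m) (f m) end.

Definition Cseries_lim (f : nat -> CC) (l : CC) : Prop :=
  forall eps : R, eps > 0 -> exists N : nat, forall n : nat,
    (n >= N)%nat -> Cnorm (Csub (Cpartial f n) l) < eps.

Definition Cabs_conv (f : nat -> CC) : Prop :=
  exists l : R, infinite_sum (fun n => Cnorm (f n)) l.

Fixpoint qpoch (x q : CC) (n : nat) : CC :=
  match n with
  | O => Cone
  | S m => Cmul (qpoch x q m) (Csub Cone (Cmul x (Cpow q m)))
  end.

Definition WP_Bailey_pair (a k q : CC) (alpha beta : nat -> CC) : Prop :=
  alpha O = Cone /\ beta O = Cone /\
  forall n : nat, (0 < n)%nat ->
    beta n = Cpartial (fun j =>
       Cmul (Cdiv (Cmul (qpoch (Cdiv k a) q (n - j)) (qpoch k q (n + j)))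
                  (Cmul (qpoch q q (n - j)) (qpoch (Cmul a q) q (n + j))))
            (alpha j)) (S n).

(* Expanding beta_n by its definition and summing along diagonals, the first sum on the left
   splits into the terms with j = 0, which form the right-hand side, and, for each j >= 1,
   alpha_j times the series over n >= j of the coefficients of alpha_j.  That inner series is a
   very-well-poised 6phi5 series with d = q^j; its sum, obtained by induction on j from a
   telescoping contiguous relation between d and d q, is exactly the coefficient of alpha_j in
   the second sum.  Its terms decay like |q a / z|^p relative to that sum, uniformly in j, which
   justifies the rearrangement. *)

From Stdlib Require Import Reals Lra Lia Field.
From Coquelicot Require Complex.
Open Scope R_scope.

(** * Complex arithmetic *)

(* [CC] and its operations are definitionally Coquelicot's complex numbers. *)
Lemma CC_field_theory :
  field_theory Czero Cone Cadd Cmul Csub Copp Cdiv Cinv (@eq CC).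
Proof. exact Complex.C_field_theory. Qed.
Add Field CC_field : CC_field_theory.

Lemma Csub_zero_r z : Csub z Czero = z.
Proof. field. Qed.

Lemma Cone_neq0 : Cone <> Czero.
Proof. intro H. injection H. lra. Qed.

Lemma Cmul_neq0 z w : z <> Czero -> w <> Czero -> Cmul z w <> Czero.
Proof.
  intros Hz Hw H.
  assert (E : Cmul (Cmul z w) (Cmul (Cinv z) (Cinv w)) = Cone) by (field; auto).
  rewrite H in E. apply Cone_neq0. rewrite <- E. ring.
Qed.

Lemma Cpow_S z n : Cpow z (S n) = Cmul (Cpow z n) z.
Proof. reflexivity. Qed.

Lemma Cpow_add z n m : Cpow z (n + m) = Cmul (Cpow z n) (Cpow z m).
Proof.
  induction m as [|m IH]; simpl.
  - rewrite Nat.add_0_r. field.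
  - rewrite Nat.add_succ_r. simpl. rewrite IH. field.
Qed.

Lemma Cnorm_mul z w : Cnorm (Cmul z w) = Cnorm z * Cnorm w.
Proof. exact (Complex.Cmod_mult z w). Qed.
Lemma Cnorm_triangle z w : Cnorm (Cadd z w) <= Cnorm z + Cnorm w.
Proof. exact (Complex.Cmod_triangle z w). Qed.
Lemma Cnorm_ge0 z : 0 <= Cnorm z.
Proof. exact (Complex.Cmod_ge_0 z). Qed.
Lemma Cnorm_opp z : Cnorm (Copp z) = Cnorm z.
Proof. exact (Complex.Cmod_opp z). Qed.
Lemma Cnorm_one : Cnorm Cone = 1.
Proof. exact Complex.Cmod_1. Qed.
Lemma Cnorm_zero : Cnorm Czero = 0.
Proof. exact Complex.Cmod_0. Qed.
Lemma Cnorm_eq0 z : Cnorm z = 0 -> z = Czero.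
Proof. exact (Complex.Cmod_eq_0 z). Qed.
Lemma Cnorm_div z w : w <> Czero -> Cnorm (Cdiv z w) = Cnorm z / Cnorm w.
Proof. exact (Complex.Cmod_div z w). Qed.

Lemma Cnorm_gt0 z : z <> Czero -> 0 < Cnorm z.
Proof.
  intro H. destruct (Cnorm_ge0 z) as [|E]; auto.
  exfalso. apply H, Cnorm_eq0. auto.
Qed.

Lemma Cnorm_sub_le z w : Cnorm (Csub z w) <= Cnorm z + Cnorm w.
Proof. unfold Csub. rewrite <- (Cnorm_opp w). apply Cnorm_triangle. Qed.

Lemma Cnorm_sub_ge z w : Cnorm z - Cnorm w <= Cnorm (Csub z w).
Proof.
  pose proof (Cnorm_triangle (Csub z w) w) as H.
  replace (Cadd (Csub z w) w) with z in H by field. lra.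
Qed.

Lemma Cnorm_pow z n : Cnorm (Cpow z n) = Cnorm z ^ n.
Proof. induction n; simpl. apply Cnorm_one. rewrite Cnorm_mul, IHn. ring. Qed.

Lemma Cnorm_mul_le z w Z W : Cnorm z <= Z -> Cnorm w <= W -> Cnorm (Cmul z w) <= Z * W.
Proof.
  intros. rewrite Cnorm_mul.
  apply Rmult_le_compat; auto using Cnorm_ge0.
Qed.

Lemma Cnorm_mul_ge z w Z W :
  0 <= Z <= Cnorm z -> 0 <= W <= Cnorm w -> Z * W <= Cnorm (Cmul z w).
Proof. intros. rewrite Cnorm_mul. apply Rmult_le_compat; lra. Qed.

Lemma Cnorm_div_le n d N D :
  d <> Czero -> Cnorm n <= N -> 0 < D <= Cnorm d -> Cnorm (Cdiv n d) <= N / D.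
Proof.
  intros Hd Hn HD. rewrite Cnorm_div by auto. unfold Rdiv.
  apply Rmult_le_compat; auto using Cnorm_ge0.
  - left. apply Rinv_0_lt_compat, Cnorm_gt0; auto.
  - apply Rinv_le_contravar; lra.
Qed.

Lemma Cnorm_div_ge n d N D :
  d <> Czero -> 0 <= N <= Cnorm n -> Cnorm d <= D -> N / D <= Cnorm (Cdiv n d).
Proof.
  intros Hd Hn HD. pose proof (Cnorm_gt0 d Hd).
  rewrite Cnorm_div by auto. unfold Rdiv.
  apply Rmult_le_compat; try lra.
  - left. apply Rinv_0_lt_compat. lra.
  - apply Rinv_le_contravar; lra.
Qed.

Lemma pow_le1 r n : 0 <= r <= 1 -> r ^ n <= 1.
Proof. intro. rewrite <- (pow1 n). apply pow_incr. lra. Qed.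

Lemma Cnorm_pow_le1 z n : Cnorm z <= 1 -> Cnorm (Cpow z n) <= 1.
Proof. intro. rewrite Cnorm_pow. apply pow_le1. split; [apply Cnorm_ge0|auto]. Qed.

Lemma Cnorm_mul_pow_le w q n : Cnorm q <= 1 -> Cnorm (Cmul w (Cpow q n)) <= Cnorm w.
Proof.
  intro hq. rewrite Cnorm_mul. pose proof (Cnorm_pow_le1 q n hq).
  pose proof (Cnorm_ge0 w). pose proof (Cnorm_ge0 (Cpow q n)). nra.
Qed.

(** * Finite sums and limits *)

Fixpoint Rpartial (e : nat -> R) (n : nat) : R :=
  match n with O => 0 | S m => Rpartial e m + e m end.

Lemma Rpartial_split e J K :
  Rpartial e (J + K) = Rpartial e J + Rpartial (fun p => e (J + p)%nat) K.
Proof.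
  induction K as [|K IH]; simpl.
  - rewrite Nat.add_0_r. ring.
  - rewrite Nat.add_succ_r. simpl. rewrite IH. ring.
Qed.

Lemma Rpartial_le e f n :
  (forall i, (i < n)%nat -> e i <= f i) -> Rpartial e n <= Rpartial f n.
Proof.
  induction n as [|n IH]; intro H; simpl. lra.
  assert (e n <= f n) by (apply H; lia).
  assert (Rpartial e n <= Rpartial f n) by (apply IH; intros; apply H; lia). lra.
Qed.

Lemma Rpartial_ge0 e n : (forall i, 0 <= e i) -> 0 <= Rpartial e n.
Proof. intro H. induction n; simpl. lra. pose proof (H n). lra. Qed.

Lemma Rpartial_scal c e n : Rpartial (fun i => c * e i) n = c * Rpartial e n.
Proof. induction n; simpl. ring. rewrite IHn. ring. Qed.

Lemma Rpartial_sum_f_R0 e n : sum_f_R0 e n = Rpartial e (S n).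
Proof. induction n; simpl. ring. rewrite IHn. simpl. ring. Qed.

Lemma Rpartial_geom_le r n : 0 <= r < 1 -> Rpartial (pow r) n <= / (1 - r).
Proof.
  intro Hr.
  assert (E : Rpartial (pow r) n * (1 - r) = 1 - r ^ n).
  { induction n; simpl. ring. rewrite Rmult_plus_distr_r, IHn. ring. }
  apply Rmult_le_reg_r with (1 - r). lra.
  rewrite E, Rinv_l by lra. pose proof (pow_le r n ltac:(lra)). lra.
Qed.

Lemma Rpartial_geom_ge0 r n : 0 <= r -> 0 <= Rpartial (pow r) n.
Proof. intro. apply Rpartial_ge0. intro. apply pow_le; auto. Qed.

Lemma Cpartial_ext f g n :
  (forall i, (i < n)%nat -> f i = g i) -> Cpartial f n = Cpartial g n.
Proof.
  induction n as [|n IH]; intro H; simpl. reflexivity.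
  rewrite IH; [rewrite H by lia; reflexivity|intros; apply H; lia].
Qed.

Lemma Cpartial_S f n : Cpartial f (S n) = Cadd (Cpartial f n) (f n).
Proof. reflexivity. Qed.

Lemma Cpartial_eq0 f n : (forall i, f i = Czero) -> Cpartial f n = Czero.
Proof. intro H. induction n as [|n IH]; simpl; [|rewrite IH, H]; field. Qed.

Lemma Cpartial_shift f n :
  Cpartial f (S n) = Cadd (f 0%nat) (Cpartial (fun i => f (S i)) n).
Proof.
  induction n as [|n IH]. simpl. field.
  rewrite Cpartial_S, IH, Cpartial_S. field.
Qed.

Lemma Cpartial_add f g n :
  Cpartial (fun i => Cadd (f i) (g i)) n = Cadd (Cpartial f n) (Cpartial g n).
Proof. induction n as [|n IH]; simpl. field. rewrite IH. field. Qed.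

Lemma Cpartial_sub f g n :
  Cpartial (fun i => Csub (f i) (g i)) n = Csub (Cpartial f n) (Cpartial g n).
Proof. induction n as [|n IH]; simpl. field. rewrite IH. field. Qed.

Lemma Cpartial_scal c f n : Cpartial (fun i => Cmul c (f i)) n = Cmul c (Cpartial f n).
Proof. induction n as [|n IH]; simpl. field. rewrite IH. field. Qed.

Lemma Cpartial_split f J K :
  Cpartial f (J + K) = Cadd (Cpartial f J) (Cpartial (fun p => f (J + p)%nat) K).
Proof.
  induction K as [|K IH]. rewrite Nat.add_0_r. simpl. field.
  rewrite Nat.add_succ_r, !Cpartial_S, IH. field.
Qed.

Lemma Cpartial_norm_le f n : Cnorm (Cpartial f n) <= Rpartial (fun i => Cnorm (f i)) n.
Proof.
  induction n as [|n IH]; simpl. rewrite Cnorm_zero. lra.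
  eapply Rle_trans. apply Cnorm_triangle. lra.
Qed.

Lemma Cpartial_triangle (h : nat -> nat -> CC) N :
  Cpartial (fun m => Cpartial (h m) (S m)) N
  = Cpartial (fun j => Cpartial (fun p => h (j + p)%nat j) (N - j)) N.
Proof.
  induction N as [|N IH]; [reflexivity|].
  rewrite (Cpartial_S (fun m => Cpartial (h m) (S m))), IH.
  rewrite (Cpartial_S (fun j => Cpartial (fun p => h (j + p)%nat j) (S N - j))).
  replace (S N - N)%nat with 1%nat by lia.
  assert (E : Cpartial (fun j => Cpartial (fun p => h (j + p)%nat j) (S N - j)) N
    = Cadd (Cpartial (fun j => Cpartial (fun p => h (j + p)%nat j) (N - j)) N)
           (Cpartial (h N) N)).
  { rewrite <- Cpartial_add. apply Cpartial_ext. intros i Hi.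
    replace (S N - i)%nat with (S (N - i)) by lia. rewrite Cpartial_S.
    replace (i + (N - i))%nat with N by lia. reflexivity. }
  rewrite E, Cpartial_S. simpl. rewrite Nat.add_0_r. field.
Qed.

Definition Cseq_lim (u : nat -> CC) (l : CC) : Prop :=
  forall eps : R, eps > 0 -> exists N : nat, forall n : nat,
    (n >= N)%nat -> Cnorm (Csub (u n) l) < eps.

Definition Rnull (r : nat -> R) : Prop :=
  forall eps, eps > 0 -> exists N, forall n, (n >= N)%nat -> r n < eps.

Lemma Cseq_lim_unique u l1 l2 : Cseq_lim u l1 -> Cseq_lim u l2 -> l1 = l2.
Proof.
  intros H1 H2.
  assert (Hz : Cnorm (Csub l1 l2) = 0).
  { destruct (Cnorm_ge0 (Csub l1 l2)) as [Hp|]; auto. exfalso.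
    set (e := Cnorm (Csub l1 l2) / 2).
    destruct (H1 e ltac:(unfold e; lra)) as [N1 HN1].
    destruct (H2 e ltac:(unfold e; lra)) as [N2 HN2].
    set (n := (N1 + N2)%nat).
    specialize (HN1 n ltac:(unfold n; lia)). specialize (HN2 n ltac:(unfold n; lia)).
    pose proof (Cnorm_triangle (Copp (Csub (u n) l1)) (Csub (u n) l2)) as T.
    replace (Cadd (Copp (Csub (u n) l1)) (Csub (u n) l2)) with (Csub l1 l2) in T by field.
    rewrite Cnorm_opp in T. unfold e in *. lra. }
  apply Cnorm_eq0 in Hz. replace l1 with (Cadd (Csub l1 l2) l2) by field.
  rewrite Hz. field.
Qed.

Lemma Cseq_lim_dominated u l r :
  (forall n, Cnorm (Csub (u n) l) <= r n) -> Rnull r -> Cseq_lim u l.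
Proof.
  intros Hb Hr eps He. destruct (Hr eps He) as [N HN]. exists N. intros n Hn.
  eapply Rle_lt_trans. apply Hb. auto.
Qed.

Lemma Rnull_scal (r : nat -> R) K : 0 <= K -> Rnull r -> Rnull (fun n => K * r n).
Proof.
  intros HK Hr eps He. destruct (Hr (eps / (K + 1))) as [N HN].
  { apply Rlt_gt, Rdiv_lt_0_compat; lra. }
  exists N. intros n Hn. specialize (HN n Hn).
  apply Rmult_lt_compat_l with (r := K + 1) in HN; [|lra].
  replace ((K + 1) * (eps / (K + 1))) with eps in HN by (field; lra).
  destruct (Rle_lt_dec (r n) 0); nra.
Qed.

Lemma Rnull_geom rho : 0 <= rho < 1 -> Rnull (pow rho).
Proof.
  intros Hr eps He.
  destruct (pow_lt_1_zero rho ltac:(rewrite Rabs_pos_eq; lra) eps He) as [N HN].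
  exists N. intros n Hn. specialize (HN n Hn).
  rewrite Rabs_pos_eq in HN by (apply pow_le; lra). auto.
Qed.

Lemma Cseq_lim_ext u v l : (forall n, u n = v n) -> Cseq_lim u l -> Cseq_lim v l.
Proof.
  intros E H eps He. destruct (H eps He) as [N HN].
  exists N. intros n Hn. rewrite <- E. auto.
Qed.

Lemma Cseq_lim_eventually_const u c N0 :
  (forall n, (n >= N0)%nat -> u n = c) -> Cseq_lim u c.
Proof.
  intros E eps He. exists N0. intros n Hn. rewrite E by auto.
  replace (Csub c c) with Czero by field. rewrite Cnorm_zero. lra.
Qed.

Lemma Cseq_lim_add u v l m :
  Cseq_lim u l -> Cseq_lim v m -> Cseq_lim (fun n => Cadd (u n) (v n)) (Cadd l m).
Proof.
  intros H1 H2 eps He. destruct (H1 (eps/2) ltac:(lra)) as [N1 HN1].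
  destruct (H2 (eps/2) ltac:(lra)) as [N2 HN2]. exists (N1 + N2)%nat. intros n Hn.
  replace (Csub (Cadd (u n) (v n)) (Cadd l m))
    with (Cadd (Csub (u n) l) (Csub (v n) m)) by field.
  eapply Rle_lt_trans. apply Cnorm_triangle.
  specialize (HN1 n ltac:(lia)). specialize (HN2 n ltac:(lia)). lra.
Qed.

Lemma Cseq_lim_scal u l c : Cseq_lim u l -> Cseq_lim (fun n => Cmul c (u n)) (Cmul c l).
Proof.
  intro H. apply Cseq_lim_dominated with (fun n => Cnorm c * Cnorm (Csub (u n) l)).
  - intro n. replace (Csub (Cmul c (u n)) (Cmul c l)) with (Cmul c (Csub (u n) l)) by field.
    rewrite Cnorm_mul. lra.
  - apply Rnull_scal. apply Cnorm_ge0.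
    intros eps He. destruct (H eps He) as [N HN]. exists N. auto.
Qed.

Lemma Cseq_lim_sub u v l m :
  Cseq_lim u l -> Cseq_lim v m -> Cseq_lim (fun n => Csub (u n) (v n)) (Csub l m).
Proof.
  intros Hu Hv. apply Cseq_lim_add; auto.
  apply (Cseq_lim_ext (fun n => Cmul (Copp Cone) (v n))). intro; field.
  replace (Copp m) with (Cmul (Copp Cone) m) by field. apply Cseq_lim_scal; auto.
Qed.

Lemma Cseries_tail_le g L B rho :
  Cseq_lim (Cpartial g) L -> 0 <= rho < 1 -> (forall p, Cnorm (g p) <= B * rho ^ p) ->
  forall M, Cnorm (Csub (Cpartial g M) L) <= B * rho ^ M / (1 - rho).
Proof.
  intros HL Hr Hg M.
  assert (Htail : forall K, Cnorm (Cpartial (fun p => g (M + p)%nat) K) <= B * rho ^ M / (1 - rho)).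
  { intro K. eapply Rle_trans. apply Cpartial_norm_le.
    eapply Rle_trans. apply (Rpartial_le _ (fun p => B * rho ^ M * rho ^ p)).
    { intros p _. rewrite Rmult_assoc, <- pow_add. apply Hg. }
    rewrite Rpartial_scal. unfold Rdiv. apply Rmult_le_compat_l.
    - pose proof (Hg M) as H. pose proof (Cnorm_ge0 (g M)).
      pose proof (pow_le rho M ltac:(lra)). nra.
    - apply Rpartial_geom_le; auto. }
  apply Rnot_lt_le. intro Hlt.
  set (eps := Cnorm (Csub (Cpartial g M) L) - B * rho ^ M / (1 - rho)).
  destruct (HL eps ltac:(unfold eps; lra)) as [N HN].
  specialize (HN (M + N)%nat ltac:(lia)). rewrite Cpartial_split in HN.
  pose proof (Cnorm_sub_le (Csub (Cadd (Cpartial g M) (Cpartial (fun p => g (M + p)%nat) N)) L)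
                           (Cpartial (fun p => g (M + p)%nat) N)) as T.
  replace (Csub (Csub (Cadd (Cpartial g M) (Cpartial (fun p => g (M + p)%nat) N)) L)
                (Cpartial (fun p => g (M + p)%nat) N)) with (Csub (Cpartial g M) L) in T by field.
  pose proof (Htail N). unfold eps in HN. lra.
Qed.

Lemma Rnull_convolution_geom (e : nat -> R) E rho :
  (forall i, 0 <= e i) -> infinite_sum e E -> 0 <= rho < 1 ->
  Rnull (fun n => Rpartial (fun j => e j * rho ^ (n - j)) n).
Proof.
  intros He HE Hr eps Heps.
  destruct (HE (eps / 4) ltac:(lra)) as [N0 HN0].
  set (J := S N0).
  assert (HJ : forall n, (n >= J)%nat -> Rabs (Rpartial e n - E) < eps / 4).
  { intros [|n] Hn; unfold J in Hn. lia.
    rewrite <- Rpartial_sum_f_R0. apply HN0. lia. }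
  destruct (Rnull_scal _ (Rpartial e J) (Rpartial_ge0 e J He) (Rnull_geom rho Hr) (eps / 2))
    as [N1 HN1]; [lra|].
  exists (J + N1)%nat. intros n Hn.
  replace n with (J + (n - J))%nat by lia. set (K := (n - J)%nat).
  rewrite Rpartial_split.
  assert (Hhead : Rpartial (fun j => e j * rho ^ (J + K - j)) J <= Rpartial e J * rho ^ K).
  { rewrite Rmult_comm, <- Rpartial_scal. apply Rpartial_le. intros i Hi.
    replace (J + K - i)%nat with (K + (J - i))%nat by lia. rewrite pow_add.
    pose proof (He i). pose proof (pow_le rho K ltac:(lra)).
    pose proof (pow_le rho (J - i) ltac:(lra)). pose proof (pow_le1 rho (J - i) ltac:(lra)).
    assert (rho ^ K * rho ^ (J - i) <= rho ^ K) by nra. nra. }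
  assert (Htail : Rpartial (fun p => e (J + p)%nat * rho ^ (J + K - (J + p))) K
                  <= Rpartial (fun p => e (J + p)%nat) K).
  { apply Rpartial_le. intros i Hi. pose proof (He (J + i)%nat).
    pose proof (pow_le rho (J + K - (J + i)) ltac:(lra)).
    pose proof (pow_le1 rho (J + K - (J + i)) ltac:(lra)). nra. }
  assert (Htail_small : Rpartial (fun p => e (J + p)%nat) K < eps / 2).
  { pose proof (Rpartial_split e J K). pose proof (HJ J (le_n J)) as a2.
    pose proof (HJ (J + K)%nat ltac:(lia)) as a3.
    apply Rabs_def2 in a2. apply Rabs_def2 in a3. lra. }
  assert (Hhead_small : Rpartial e J * rho ^ K < eps / 2) by (apply HN1; unfold K; lia).
  lra.
Qed.

(* Row [j] of the array sums to [g j] and decays geometrically relative to [g j]; this is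
   what allows the array [w j p * u j] to be summed along its diagonals m = j + p. *)
Lemma Cseq_lim_diagonal_sums (w : nat -> nat -> CC) (g u : nat -> CC) C rho :
  0 <= C -> 0 <= rho < 1 ->
  (forall j, Cseq_lim (Cpartial (w j)) (g j)) ->
  (forall j p, Cnorm (w j p) <= C * Cnorm (g j) * rho ^ p) ->
  Cabs_conv (fun j => Cmul (g j) (u j)) ->
  Cseq_lim (fun N => Csub (Cpartial (fun m => Cpartial (fun j => Cmul (w j (m - j)%nat) (u j)) (S m)) N)
                          (Cpartial (fun j => Cmul (g j) (u j)) N)) Czero.
Proof.
  intros HC Hr Hlim Hw [E HE].
  apply Cseq_lim_dominated with
    (fun N => C / (1 - rho) * Rpartial (fun j => Cnorm (Cmul (g j) (u j)) * rho ^ (N - j)) N).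
  - intro N. rewrite (Cpartial_triangle (fun m j => Cmul (w j (m - j)%nat) (u j))).
    replace (Csub (Csub _ _) Czero)
      with (Cpartial (fun j => Cmul (u j) (Csub (Cpartial (w j) (N - j)) (g j))) N).
    2:{ rewrite <- Cpartial_sub.
        transitivity (Cpartial (fun j => Csub (Cpartial (fun p => Cmul (w j (j + p - j)%nat) (u j)) (N - j))
                                              (Cmul (g j) (u j))) N); [|ring].
        apply Cpartial_ext. intros j _.
        rewrite (Cpartial_ext (fun p => Cmul (w j (j + p - j)%nat) (u j)) (fun p => Cmul (u j) (w j p))).
        + rewrite Cpartial_scal. field.
        + intros p _. replace (j + p - j)%nat with p by lia. field. }
    eapply Rle_trans. apply Cpartial_norm_le. rewrite <- Rpartial_scal.
    apply Rpartial_le. intros j _.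
    pose proof (Cseries_tail_le (w j) (g j) (C * Cnorm (g j)) rho (Hlim j) Hr (Hw j) (N - j)) as T.
    rewrite !Cnorm_mul.
    apply Rle_trans with (Cnorm (u j) * (C * Cnorm (g j) * rho ^ (N - j) / (1 - rho))).
    + apply Rmult_le_compat_l; auto using Cnorm_ge0.
    + right. field. lra.
  - apply Rnull_scal.
    + apply Rmult_le_pos; auto. left. apply Rinv_0_lt_compat. lra.
    + apply (Rnull_convolution_geom _ E rho); auto. intros; apply Cnorm_ge0.
Qed.

(** * q-Pochhammer symbols *)

Lemma qpoch_S x q n : qpoch x q (S n) = Cmul (qpoch x q n) (Csub Cone (Cmul x (Cpow q n))).
Proof. reflexivity. Qed.

Lemma qpoch_congr x y q n : x = y -> qpoch x q n = qpoch y q n.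
Proof. intros ->. reflexivity. Qed.

Lemma qpoch_add x q n m :
  qpoch x q (n + m) = Cmul (qpoch x q n) (qpoch (Cmul x (Cpow q n)) q m).
Proof.
  induction m as [|m IH].
  - rewrite Nat.add_0_r. simpl. field.
  - rewrite Nat.add_succ_r, !qpoch_S, IH, Cpow_add. field.
Qed.

Lemma qpoch_shift x q n : qpoch x q (S n) = Cmul (Csub Cone x) (qpoch (Cmul x q) q n).
Proof.
  change (S n) with (1 + n)%nat. rewrite qpoch_add. simpl.
  rewrite (qpoch_congr (Cmul x (Cmul Cone q)) (Cmul x q)) by field. field.
Qed.

Lemma qpoch_factor_neq0 x q :
  (forall n, qpoch x q n <> Czero) -> forall l, Csub Cone (Cmul x (Cpow q l)) <> Czero.
Proof. intros H l E. apply (H (S l)). rewrite qpoch_S, E. field. Qed.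

Lemma qpoch_shift_div x q n :
  Csub Cone (Cmul x (Cpow q n)) <> Czero ->
  qpoch x q n = Cdiv (Cmul (Csub Cone x) (qpoch (Cmul q x) q n)) (Csub Cone (Cmul x (Cpow q n))).
Proof.
  intro H. pose proof (qpoch_shift x q n) as E. rewrite qpoch_S in E.
  rewrite (qpoch_congr (Cmul q x) (Cmul x q)) by field. rewrite <- E. field. auto.
Qed.

Lemma qpoch_first_factor_neq0 x q : (forall n, qpoch x q n <> Czero) -> Csub Cone x <> Czero.
Proof. intros H E. apply (H 1%nat). simpl. rewrite <- E. field. Qed.

Lemma qpoch_shift1_neq0 x q :
  (forall n, qpoch x q n <> Czero) -> forall n, qpoch (Cmul x q) q n <> Czero.
Proof. intros H n E. apply (H (S n)). rewrite qpoch_shift, E. field. Qed.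

Lemma qpoch_neq0 x q n :
  (forall l, Csub Cone (Cmul x (Cpow q l)) <> Czero) -> qpoch x q n <> Czero.
Proof.
  intro H. induction n as [|n IH]; simpl.
  - apply Cone_neq0.
  - apply Cmul_neq0; auto.
Qed.

Lemma qpoch_shift_neq0 x q :
  (forall n, qpoch x q n <> Czero) -> forall e p, qpoch (Cmul x (Cpow q e)) q p <> Czero.
Proof.
  intros H e p. apply qpoch_neq0. intro l.
  replace (Cmul (Cmul x (Cpow q e)) (Cpow q l)) with (Cmul x (Cpow q (e + l)))
    by (rewrite Cpow_add; field).
  apply qpoch_factor_neq0; auto.
Qed.

Lemma qpoch_neq0_small x q : Cnorm q < 1 -> Cnorm x < 1 -> forall n, qpoch x q n <> Czero.
Proof.
  intros hq hx n. apply qpoch_neq0. intros l E.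
  pose proof (Cnorm_sub_ge Cone (Cmul x (Cpow q l))) as H.
  rewrite E, Cnorm_zero, Cnorm_one in H.
  pose proof (Cnorm_mul_pow_le x q l ltac:(lra)). lra.
Qed.

Lemma one_plus_le_exp t : 0 <= t -> 1 + t <= exp t.
Proof.
  intro Ht. destruct (Req_dec t 0) as [->|Hne].
  - rewrite exp_0. lra.
  - left. apply exp_ineq1. auto.
Qed.

Lemma qpoch_norm_le_exp w q n :
  Cnorm (qpoch w q n) <= exp (Cnorm w * Rpartial (pow (Cnorm q)) n).
Proof.
  induction n as [|n IH]; simpl.
  - rewrite Cnorm_one, Rmult_0_r, exp_0. lra.
  - rewrite Cnorm_mul, Rmult_plus_distr_l, exp_plus.
    apply Rmult_le_compat; try apply Cnorm_ge0; auto.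
    eapply Rle_trans. apply Cnorm_sub_le. rewrite Cnorm_one, Cnorm_mul, Cnorm_pow.
    apply one_plus_le_exp. apply Rmult_le_pos; [apply Cnorm_ge0|apply pow_le, Cnorm_ge0].
Qed.

Definition qpoch_ub (w q : CC) : R := exp (Cnorm w / (1 - Cnorm q)).

Lemma qpoch_ub_pos w q : 0 < qpoch_ub w q.
Proof. apply exp_pos. Qed.

Lemma qpoch_norm_le w' w q n :
  Cnorm q < 1 -> Cnorm w' <= Cnorm w -> Cnorm (qpoch w' q n) <= qpoch_ub w q.
Proof.
  intros hq hw. eapply Rle_trans. apply qpoch_norm_le_exp. unfold qpoch_ub.
  assert (E : Cnorm w' * Rpartial (pow (Cnorm q)) n <= Cnorm w / (1 - Cnorm q)).
  { apply Rmult_le_compat; auto using Cnorm_ge0, Rpartial_geom_ge0.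
    apply Rpartial_geom_le. split; auto using Cnorm_ge0. }
  destruct E as [E|E].
  - left. apply exp_increasing. auto.
  - right. rewrite E. reflexivity.
Qed.

Lemma qpoch_norm_ge_small v q p :
  Cnorm q <= 1 -> Cnorm v <= 1 ->
  1 - Cnorm v * Rpartial (pow (Cnorm q)) p <= Cnorm (qpoch v q p).
Proof.
  intros hq hv. induction p as [|p IH]; simpl.
  - rewrite Cnorm_one. lra.
  - rewrite Cnorm_mul.
    pose proof (Cnorm_sub_ge Cone (Cmul v (Cpow q p))) as Hf.
    rewrite Cnorm_one, Cnorm_mul, Cnorm_pow in Hf.
    pose proof (pow_le (Cnorm q) p (Cnorm_ge0 q)).
    pose proof (pow_le1 (Cnorm q) p ltac:(split; [apply Cnorm_ge0|auto])).
    pose proof (Rpartial_geom_ge0 (Cnorm q) p (Cnorm_ge0 q)).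
    pose proof (Cnorm_ge0 v). pose proof (Cnorm_ge0 (qpoch v q p)).
    set (a := Cnorm v * Cnorm q ^ p) in *.
    assert (0 <= a <= 1) by (unfold a; split; nra).
    assert (Cnorm (qpoch v q p) * (1 - a)
            <= Cnorm (qpoch v q p) * Cnorm (Csub Cone (Cmul v (Cpow q p)))) by nra.
    assert ((1 - Cnorm v * Rpartial (pow (Cnorm q)) p) * (1 - a)
            <= Cnorm (qpoch v q p) * (1 - a)) by nra.
    assert (0 <= Cnorm v * Rpartial (pow (Cnorm q)) p * a)
      by (repeat apply Rmult_le_pos; lra).
    assert (Cnorm v * (Rpartial (pow (Cnorm q)) p + Cnorm q ^ p)
            = Cnorm v * Rpartial (pow (Cnorm q)) p + a) by (unfold a; ring).
    assert ((1 - Cnorm v * Rpartial (pow (Cnorm q)) p) * (1 - a)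
            = 1 - Cnorm v * Rpartial (pow (Cnorm q)) p - a
              + Cnorm v * Rpartial (pow (Cnorm q)) p * a) by ring.
    lra.
Qed.

Lemma qpoch_norm_lower_bound_finite w q N :
  (forall n, qpoch w q n <> Czero) ->
  exists c, 0 < c /\ forall n, (n <= N)%nat -> c <= Cnorm (qpoch w q n).
Proof.
  intro H. induction N as [|N [c [Hc Hn]]].
  - exists 1. split. lra. intros n Hn. inversion Hn. simpl. rewrite Cnorm_one. lra.
  - exists (Rmin c (Cnorm (qpoch w q (S N)))). split.
    + apply Rmin_glb_lt; auto. apply Cnorm_gt0; auto.
    + intros n Hle. destruct (Nat.eq_dec n (S N)) as [->|Ne].
      * apply Rmin_r.
      * eapply Rle_trans. apply Rmin_l. apply Hn. lia.
Qed.

Lemma qpoch_norm_lower_bound w q :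
  Cnorm q < 1 -> (forall n, qpoch w q n <> Czero) ->
  exists c, 0 < c /\ forall n, c <= Cnorm (qpoch w q n).
Proof.
  intros hq H. pose proof (Cnorm_ge0 q) as hq0.
  destruct (Rnull_scal _ (Cnorm w) (Cnorm_ge0 w) (Rnull_geom (Cnorm q) ltac:(lra))
      ((1 - Cnorm q) / 2) ltac:(lra)) as [N HN].
  destruct (qpoch_norm_lower_bound_finite w q N H) as [c [Hc Hfin]].
  exists (c / 2). split. lra.
  intro n. destruct (Compare_dec.le_lt_dec n N) as [Hle|Hlt].
  - specialize (Hfin n Hle). lra.
  - replace n with (N + (n - N))%nat by lia. rewrite qpoch_add, Cnorm_mul.
    specialize (HN N (le_n N)).
    pose proof (qpoch_norm_ge_small (Cmul w (Cpow q N)) q (n - N) ltac:(lra)) as Hs.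
    rewrite Cnorm_mul, Cnorm_pow in Hs.
    pose proof (Rpartial_geom_le (Cnorm q) (n - N) ltac:(lra)) as Hg.
    pose proof (Rpartial_geom_ge0 (Cnorm q) (n - N) hq0).
    assert (Hhalf : 1 / 2 <= Cnorm (qpoch (Cmul w (Cpow q N)) q (n - N))).
    { assert (Cnorm w * Cnorm q ^ N * Rpartial (pow (Cnorm q)) (n - N) <= 1 / 2).
      { apply Rle_trans with ((1 - Cnorm q) / 2 * / (1 - Cnorm q)).
        - apply Rmult_le_compat; try lra.
          apply Rmult_le_pos. apply Cnorm_ge0. apply pow_le, hq0.
        - right. field. lra. }
      apply Rle_trans with (1 - Cnorm w * Cnorm q ^ N * Rpartial (pow (Cnorm q)) (n - N)).
      lra. apply Hs. lra. }
    pose proof (Hfin N (le_n N)). nra.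
Qed.

Lemma qpoch_shift_norm_lower_bound w q :
  Cnorm q < 1 -> (forall n, qpoch w q n <> Czero) ->
  exists c, 0 < c /\ forall e p, c <= Cnorm (qpoch (Cmul w (Cpow q e)) q p).
Proof.
  intros hq H. destruct (qpoch_norm_lower_bound w q hq H) as [c [Hc Hn]].
  exists (c / qpoch_ub w q). split. apply Rdiv_lt_0_compat; auto. apply qpoch_ub_pos.
  intros e p. pose proof (Hn (e + p)%nat) as Hep. rewrite qpoch_add, Cnorm_mul in Hep.
  pose proof (qpoch_norm_le w w q e hq (Rle_refl _)). pose proof (qpoch_ub_pos w q).
  pose proof (Cnorm_ge0 (qpoch (Cmul w (Cpow q e)) q p)).
  apply Rmult_le_reg_r with (qpoch_ub w q); auto. unfold Rdiv.
  rewrite Rmult_assoc, Rinv_l by lra. rewrite Rmult_1_r. nra.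
Qed.

(** * A very-well-poised 6phi5 summation *)

(* With A := A0 * D, [vwp_term] is (1 - A) times the m-th term of the very-well-poised
   6phi5 series with parameters A; b, c, d := D and argument y; under A0 q = b c y we
   have c y D = A q / b, b y D = A q / c, b c y = A q / d and y = A q / (b c d). *)
Definition vwp_term (A0 b c y q D : CC) (m : nat) : CC :=
  Cmul (Cmul (Csub Cone (Cmul (Cmul (Cmul A0 D) (Cpow q m)) (Cpow q m)))
    (Cdiv (Cmul (Cmul (Cmul (qpoch (Cmul A0 D) q m) (qpoch b q m)) (qpoch c q m)) (qpoch D q m))
          (Cmul (Cmul (Cmul (qpoch q q m) (qpoch (Cmul (Cmul c y) D) q m))
                      (qpoch (Cmul (Cmul b y) D) q m)) (qpoch (Cmul (Cmul b c) y) q m))))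
  (Cpow y m).

(* The sum of the series for D = q^i, i.e. the 6phi5 summation formula with its infinite
   products cancelled down to finite ones. *)
Definition vwp_value (A0 b c y q : CC) (i : nat) : CC :=
  Cmul (Csub Cone (Cmul A0 (Cpow q i)))
    (Cdiv (Cmul (qpoch (Cmul c y) q i) (qpoch (Cmul b y) q i))
          (Cmul (qpoch (Cmul (Cmul b c) y) q i) (qpoch y q i))).

Definition vwp_cert (A0 b c y q D : CC) (m : nat) : CC :=
  match m with O => Czero | S m1 =>
   Cdiv (Cmul (Cmul (Cmul (Cmul (Cmul D (qpoch (Cmul A0 D) q m)) (qpoch b q m)) (qpoch c q m))
                    (qpoch (Cmul D q) q m1)) (Cpow y m))
        (Cmul (Cmul (Cmul (qpoch q q m1) (qpoch (Cmul (Cmul (Cmul c y) D) q) q m1))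
                    (qpoch (Cmul (Cmul (Cmul b y) D) q) q m1)) (qpoch (Cmul (Cmul b c) y) q m1))
  end.

Section VeryWellPoised.

Variables A0 b c y q : CC.
Hypothesis hq0 : q <> Czero.
Hypothesis hA0 : Cmul A0 q = Cmul (Cmul b c) y.
Hypothesis hbcy : forall n, qpoch (Cmul (Cmul b c) y) q n <> Czero.

Lemma vwp_contiguous D m :
  (forall n, qpoch q q n <> Czero) ->
  (forall n, qpoch (Cmul (Cmul c y) D) q n <> Czero) ->
  (forall n, qpoch (Cmul (Cmul b y) D) q n <> Czero) ->
  Cmul (Cmul (Csub Cone (Cmul A0 D)) (Csub Cone (Cmul y D))) (vwp_term A0 b c y q (Cmul D q) m)
  = Csub (Cadd (Cmul (Cmul (Csub Cone (Cmul (Cmul c y) D)) (Csub Cone (Cmul (Cmul b y) D)))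
                     (vwp_term A0 b c y q D m)) (vwp_cert A0 b c y q D m))
         (vwp_cert A0 b c y q D (S m)).
Proof.
  intros hqq Hcy Hby.
  assert (HA0 : A0 = Cdiv (Cmul (Cmul b c) y) q) by (rewrite <- hA0; field; auto).
  destruct m as [|m1].
  - unfold vwp_term, vwp_cert. simpl. rewrite HA0. field.
    repeat split; try apply Cone_neq0; auto.
  - unfold vwp_term, vwp_cert. cbv beta iota.
    rewrite (qpoch_S (Cmul A0 D) q (S m1)), (qpoch_S b q (S m1)), (qpoch_S c q (S m1)).
    rewrite (qpoch_S (Cmul D q) q m1), (qpoch_S q q m1), (qpoch_S (Cmul (Cmul (Cmul c y) D) q) q m1),
      (qpoch_S (Cmul (Cmul (Cmul b y) D) q) q m1), (qpoch_S (Cmul (Cmul b c) y) q m1).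
    rewrite !(qpoch_shift (Cmul A0 D) q m1), !(qpoch_shift D q m1),
      !(qpoch_shift (Cmul (Cmul c y) D) q m1), !(qpoch_shift (Cmul (Cmul b y) D) q m1).
    rewrite ?(qpoch_S b q m1), ?(qpoch_S c q m1), ?(qpoch_S q q m1), ?(qpoch_S (Cmul (Cmul b c) y) q m1).
    rewrite (qpoch_S (Cmul A0 (Cmul D q)) q m1), (qpoch_S (Cmul (Cmul c y) (Cmul D q)) q m1),
      (qpoch_S (Cmul (Cmul b y) (Cmul D q)) q m1).
    rewrite (qpoch_congr (Cmul A0 (Cmul D q)) (Cmul (Cmul A0 D) q)) by field.
    rewrite (qpoch_congr (Cmul (Cmul c y) (Cmul D q)) (Cmul (Cmul (Cmul c y) D) q)) by field.
    rewrite (qpoch_congr (Cmul (Cmul b y) (Cmul D q)) (Cmul (Cmul (Cmul b y) D) q)) by field.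
    rewrite !Cpow_S.
    pose proof (qpoch_shift1_neq0 _ _ Hcy) as Hcyq.
    pose proof (qpoch_shift1_neq0 _ _ Hby) as Hbyq.
    pose proof (qpoch_first_factor_neq0 _ _ Hcy). pose proof (qpoch_first_factor_neq0 _ _ Hby).
    pose proof (qpoch_factor_neq0 _ _ Hcyq m1). pose proof (qpoch_factor_neq0 _ _ Hbyq m1).
    pose proof (qpoch_factor_neq0 _ _ hqq m1). pose proof (qpoch_factor_neq0 _ _ hbcy m1).
    pose proof (Hcyq m1). pose proof (Hbyq m1). pose proof (hqq m1). pose proof (hbcy m1).
    rewrite HA0. field. repeat split; auto.
Qed.

Lemma vwp_partial_contiguous D M :
  (forall n, qpoch q q n <> Czero) ->
  (forall n, qpoch (Cmul (Cmul c y) D) q n <> Czero) ->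
  (forall n, qpoch (Cmul (Cmul b y) D) q n <> Czero) ->
  Cmul (Cmul (Csub Cone (Cmul A0 D)) (Csub Cone (Cmul y D)))
       (Cpartial (vwp_term A0 b c y q (Cmul D q)) M)
  = Csub (Cmul (Cmul (Csub Cone (Cmul (Cmul c y) D)) (Csub Cone (Cmul (Cmul b y) D)))
               (Cpartial (vwp_term A0 b c y q D) M)) (vwp_cert A0 b c y q D M).
Proof.
  intros Hqq Hcy Hby. induction M as [|M IH].
  - simpl. field.
  - rewrite !Cpartial_S.
    transitivity (Cadd
      (Cmul (Cmul (Csub Cone (Cmul A0 D)) (Csub Cone (Cmul y D)))
            (Cpartial (vwp_term A0 b c y q (Cmul D q)) M))
      (Cmul (Cmul (Csub Cone (Cmul A0 D)) (Csub Cone (Cmul y D)))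
            (vwp_term A0 b c y q (Cmul D q) M))); [field|].
    rewrite IH, vwp_contiguous; auto. field.
Qed.

Hypothesis hq : Cnorm q < 1.
Hypothesis hy : Cnorm y < 1.
Hypothesis hA : forall i, Csub Cone (Cmul A0 (Cpow q i)) <> Czero.
Hypothesis hcy : forall n, qpoch (Cmul c y) q n <> Czero.
Hypothesis hby : forall n, qpoch (Cmul b y) q n <> Czero.

Lemma vwp_cert_bound i :
  exists B, forall M, Cnorm (vwp_cert A0 b c y q (Cpow q i) M) <= B * Cnorm y ^ M.
Proof.
  assert (Hqq : forall n, qpoch q q n <> Czero) by (apply qpoch_neq0_small; auto).
  destruct (qpoch_norm_lower_bound q q hq Hqq) as [k1 [Hk1 Hb1]].
  destruct (qpoch_shift_norm_lower_bound _ q hq hcy) as [k2 [Hk2 Hb2]].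
  destruct (qpoch_shift_norm_lower_bound _ q hq hby) as [k3 [Hk3 Hb3]].
  destruct (qpoch_norm_lower_bound _ q hq hbcy) as [k4 [Hk4 Hb4]].
  set (U := 1 * qpoch_ub A0 q * qpoch_ub b q * qpoch_ub c q * qpoch_ub Cone q).
  assert (HU : 0 < U)
    by (unfold U; repeat apply Rmult_lt_0_compat; try lra; apply qpoch_ub_pos).
  exists (U / (k1 * k2 * k3 * k4)). intros [|m].
  - cbn [vwp_cert]. rewrite Cnorm_zero. apply Rmult_le_pos; [|apply pow_le, Cnorm_ge0].
    apply Rlt_le, Rdiv_lt_0_compat; auto. repeat apply Rmult_lt_0_compat; auto.
  - cbn [vwp_cert].
    rewrite (qpoch_congr (Cmul (Cmul (Cmul c y) (Cpow q i)) q) (Cmul (Cmul c y) (Cpow q (S i))))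
      by (simpl; field).
    rewrite (qpoch_congr (Cmul (Cmul (Cmul b y) (Cpow q i)) q) (Cmul (Cmul b y) (Cpow q (S i))))
      by (simpl; field).
    replace (U / (k1 * k2 * k3 * k4) * Cnorm y ^ S m)
      with (U * Cnorm y ^ S m / (k1 * k2 * k3 * k4)) by (field; repeat split; lra).
    pose proof (Cnorm_pow_le1 q i ltac:(lra)).
    apply Cnorm_div_le.
    + repeat apply Cmul_neq0; auto; apply qpoch_shift_neq0; auto.
    + unfold U. rewrite <- Cnorm_pow.
      repeat apply Cnorm_mul_le; try apply Rle_refl; auto;
        apply qpoch_norm_le; auto; try lra.
      * apply Cnorm_mul_pow_le. lra.
      * rewrite Cnorm_one, <- Cpow_S. apply Cnorm_pow_le1. lra.
    + split. repeat apply Rmult_lt_0_compat; auto.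
      repeat (apply Cnorm_mul_ge || split); auto;
        repeat apply Rmult_le_pos; lra.
Qed.

Lemma vwp_term_one_vanishes m : vwp_term A0 b c y q Cone (S m) = Czero.
Proof. unfold vwp_term. rewrite (qpoch_shift Cone). unfold Cdiv. ring. Qed.

Lemma vwp_cert_vanishes i : Cseq_lim (vwp_cert A0 b c y q (Cpow q i)) Czero.
Proof.
  destruct (vwp_cert_bound i) as [B HB].
  apply Cseq_lim_dominated with (fun M => B * Cnorm y ^ M).
  - intro n. rewrite Csub_zero_r. apply HB.
  - apply Rnull_scal.
    + eapply Rle_trans. apply Cnorm_ge0. rewrite <- (Rmult_1_r B), <- (pow_O (Cnorm y)). apply HB.
    + apply Rnull_geom. split; auto using Cnorm_ge0.
Qed.

Lemma vwp_value_S i :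
  vwp_value A0 b c y q (S i)
  = Cmul (Cdiv Cone (Cmul (Csub Cone (Cmul A0 (Cpow q i))) (Csub Cone (Cmul y (Cpow q i)))))
         (Cmul (Cmul (Csub Cone (Cmul (Cmul c y) (Cpow q i))) (Csub Cone (Cmul (Cmul b y) (Cpow q i))))
               (vwp_value A0 b c y q i)).
Proof.
  pose proof (qpoch_neq0_small y q hq hy) as Hyy.
  pose proof (qpoch_factor_neq0 _ _ Hyy i). pose proof (qpoch_factor_neq0 _ _ hbcy i).
  assert (Hq_bcy : Csub q (Cmul (Cmul (Cmul b c) y) (Cpow q i)) <> Czero).
  { intro Ez. apply (hA i).
    replace (Csub Cone (Cmul A0 (Cpow q i))) with (Cdiv (Csub q (Cmul (Cmul A0 q) (Cpow q i))) q)
      by (field; auto).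
    rewrite hA0, Ez. field. auto. }
  unfold vwp_value. rewrite !qpoch_S, Cpow_S.
  replace A0 with (Cdiv (Cmul (Cmul b c) y) q) by (rewrite <- hA0; field; auto).
  field. repeat split; auto.
Qed.

Lemma vwp_summation i :
  Cseq_lim (Cpartial (vwp_term A0 b c y q (Cpow q i))) (vwp_value A0 b c y q i).
Proof.
  assert (Hqq : forall n, qpoch q q n <> Czero) by (apply qpoch_neq0_small; auto).
  induction i as [|i IH].
  - apply (Cseq_lim_eventually_const _ _ 1%nat). intros [|n] Hn; [lia|].
    rewrite Cpartial_shift, Cpartial_eq0 by (intro; apply vwp_term_one_vanishes).
    unfold vwp_term, vwp_value. simpl. field. exact Cone_neq0.
  - set (D := Cpow q i).
    assert (HyD : Csub Cone (Cmul y D) <> Czero)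
      by (apply qpoch_factor_neq0, qpoch_neq0_small; auto).
    assert (Hpartial : forall M, Cpartial (vwp_term A0 b c y q (Cpow q (S i))) M
      = Cmul (Cdiv Cone (Cmul (Csub Cone (Cmul A0 D)) (Csub Cone (Cmul y D))))
          (Csub (Cmul (Cmul (Csub Cone (Cmul (Cmul c y) D)) (Csub Cone (Cmul (Cmul b y) D)))
                      (Cpartial (vwp_term A0 b c y q D) M))
                (vwp_cert A0 b c y q D M))).
    { intro M. change (Cpow q (S i)) with (Cmul D q).
      rewrite <- vwp_partial_contiguous by (auto; apply qpoch_shift_neq0; auto).
      field. split; auto. apply hA. }
    rewrite vwp_value_S. fold D.
    apply (Cseq_lim_ext _ _ _ (fun M => eq_sym (Hpartial M))).
    rewrite <- (Csub_zero_r (Cmul _ (vwp_value A0 b c y q i))).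
    apply Cseq_lim_scal, Cseq_lim_sub, vwp_cert_vanishes. apply Cseq_lim_scal, IH.
Qed.

End VeryWellPoised.

(** * The WP-Bailey pair *)

Section WPBailey.

Variables a k q z : CC.
Hypothesis hq : Cnorm q < 1.
Hypothesis hq0 : q <> Czero.
Hypothesis hz0 : z <> Czero.
Hypothesis ha0 : a <> Czero.
Hypothesis hx : Cnorm (Cdiv (Cmul q a) z) < 1.
Hypothesis hk : Csub Cone k <> Czero.
Hypothesis hqk : forall n, qpoch (Cmul q k) q n <> Czero.
Hypothesis hqkz : forall n, qpoch (Cdiv (Cmul q k) z) q n <> Czero.
Hypothesis hqa : forall n, qpoch (Cmul q a) q n <> Czero.

Let x := Cdiv (Cmul q a) z.

(* Coefficient of beta_(m+1) on the left; (q sqrt k, -q sqrt k; q)_n / (sqrt k, -sqrt k; q)_n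
   has been simplified to (1 - k q^(2n)) / (1 - k). *)
Definition beta_coef (m : nat) : CC :=
  Cmul (Cdiv (Cmul (Cmul (Csub Cone (Cmul k (Cmul (Cpow q (S m)) (Cpow q (S m)))))
                         (qpoch z q (S m))) (qpoch q q m))
             (Cmul (Cmul (Csub Cone k) (qpoch (Cmul q k) q (S m)))
                   (qpoch (Cdiv (Cmul q k) z) q (S m))))
       (Cpow x (S m)).

Definition alpha_coef (m : nat) : CC :=
  Cmul (Cdiv (Cmul (qpoch z q (S m)) (qpoch q q m))
             (Cmul (qpoch (Cmul q a) q (S m)) (qpoch x q (S m))))
       (Cpow x (S m)).

Definition bailey_kernel (n j : nat) : CC :=
  Cdiv (Cmul (qpoch (Cdiv k a) q (n - j)) (qpoch k q (n + j)))
       (Cmul (qpoch q q (n - j)) (qpoch (Cmul a q) q (n + j))).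

(* The sum over n >= j + 1 of the coefficient of alpha_(j+1) is a 6phi5 series. *)
Definition inner_term (j p : nat) : CC :=
  vwp_term (Cmul k (Cpow q (S j))) (Cdiv k a) (Cmul z (Cpow q (S j))) x q (Cpow q (S j)) p.

Definition inner_value (j : nat) : CC :=
  vwp_value (Cmul k (Cpow q (S j))) (Cdiv k a) (Cmul z (Cpow q (S j))) x q (S j).

Lemma qpoch_qq_neq0 n : qpoch q q n <> Czero.
Proof. apply qpoch_neq0_small; auto. Qed.

Lemma qpoch_x_neq0 n : qpoch x q n <> Czero.
Proof. apply qpoch_neq0_small; auto. Qed.

Lemma beta_coef_kernel j p :
  Cmul (beta_coef (j + p)) (bailey_kernel (S (j + p)) (S j))
  = Cmul (Cdiv (alpha_coef j) (inner_value j)) (inner_term j p).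
Proof.
  pose proof qpoch_qq_neq0. pose proof qpoch_x_neq0.
  unfold beta_coef, alpha_coef, bailey_kernel, inner_value, inner_term, vwp_value, vwp_term.
  set (J := S j).
  replace (S (j + p) - J)%nat with p by (unfold J; lia).
  replace (S (j + p) + J)%nat with ((J + J) + p)%nat by (unfold J; lia).
  change (S (j + p)) with (J + p)%nat. fold J.
  rewrite !(qpoch_congr (Cmul a q) (Cmul q a)) by field.
  rewrite (qpoch_add z q J p), (qpoch_add (Cmul q k) q J p), (qpoch_add (Cdiv (Cmul q k) z) q J p).
  rewrite (qpoch_add q q j p), (qpoch_add (Cmul q a) q (J + J) p), (qpoch_add (Cmul q a) q J J).
  assert (hkJ : Csub Cone (Cmul k (Cpow q (J + J))) <> Czero).
  { replace (Cmul k (Cpow q (J + J))) with (Cmul (Cmul q k) (Cpow q (J + j)))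
      by (replace (J + J)%nat with (S (J + j)) by (unfold J; lia); rewrite Cpow_S; field).
    apply qpoch_factor_neq0; auto. }
  rewrite (qpoch_add k q (J + J) p), (qpoch_shift_div k q (J + J) hkJ), (qpoch_add (Cmul q k) q J J).
  rewrite (qpoch_congr (Cmul q (Cpow q j)) (Cpow q J)) by (unfold J; rewrite Cpow_S; field).
  rewrite (qpoch_congr (Cmul (Cmul k (Cpow q J)) (Cpow q J)) (Cmul k (Cpow q (J + J))))
    by (rewrite Cpow_add; field).
  unfold x.
  rewrite (qpoch_congr (Cmul (Cmul (Cmul z (Cpow q J)) (Cdiv (Cmul q a) z)) (Cpow q J))
                       (Cmul (Cmul q a) (Cpow q (J + J)))) by (rewrite Cpow_add; field; auto).
  rewrite (qpoch_congr (Cmul (Cmul (Cdiv k a) (Cdiv (Cmul q a) z)) (Cpow q J))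
                       (Cmul (Cdiv (Cmul q k) z) (Cpow q J))) by (field; auto).
  rewrite (qpoch_congr (Cmul (Cmul (Cdiv k a) (Cmul z (Cpow q J))) (Cdiv (Cmul q a) z))
                       (Cmul (Cmul q k) (Cpow q J))) by (field; auto).
  rewrite (qpoch_congr (Cmul (Cmul z (Cpow q J)) (Cdiv (Cmul q a) z))
                       (Cmul (Cmul q a) (Cpow q J))) by (field; auto).
  rewrite (qpoch_congr (Cmul (Cdiv k a) (Cdiv (Cmul q a) z)) (Cdiv (Cmul q k) z)) by (field; auto).
  rewrite !Cpow_add.
  rewrite (qpoch_congr (Cmul (Cmul (Cdiv k a) (Cmul z (Cpow q J))) (Cdiv (Cmul q a) z))
                       (Cmul (Cmul q k) (Cpow q J))) by (field; auto).
  field. change (R1, R0) with Cone.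
  repeat split; auto; try (apply qpoch_shift_neq0; auto).
  - rewrite <- Cpow_add. apply qpoch_shift_neq0; auto.
  - replace (Cmul (Cmul k (Cpow q J)) (Cpow q J)) with (Cmul k (Cpow q (J + J)))
      by (rewrite Cpow_add; field). auto.
Qed.

Lemma inner_value_lower_bound :
  exists c, 0 < c /\ forall j, c <= Cnorm (inner_value j).
Proof.
  destruct (qpoch_shift_norm_lower_bound _ q hq hqa) as [c1 [Hc1 Hb1]].
  destruct (qpoch_norm_lower_bound _ q hq hqkz) as [c2 [Hc2 Hb2]].
  destruct (qpoch_shift_norm_lower_bound _ q hq hqk) as [c3 [Hc3 Hb3]].
  pose proof (qpoch_ub_pos (Cmul q k) q). pose proof (qpoch_ub_pos x q).
  exists (c3 * (c1 * c2 / (qpoch_ub (Cmul q k) q * qpoch_ub x q))). split.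
  { apply Rmult_lt_0_compat; auto. apply Rdiv_lt_0_compat; apply Rmult_lt_0_compat; auto. }
  intro j. unfold inner_value, vwp_value. set (J := S j).
  rewrite (qpoch_congr (Cmul (Cmul z (Cpow q J)) x) (Cmul (Cmul q a) (Cpow q J)))
    by (unfold x; field; auto).
  rewrite (qpoch_congr (Cmul (Cdiv k a) x) (Cdiv (Cmul q k) z)) by (unfold x; field; auto).
  rewrite (qpoch_congr (Cmul (Cmul (Cdiv k a) (Cmul z (Cpow q J))) x) (Cmul (Cmul q k) (Cpow q J)))
    by (unfold x; field; auto).
  apply Cnorm_mul_ge; split.
  - lra.
  - replace (Csub Cone (Cmul (Cmul k (Cpow q J)) (Cpow q J)))
      with (qpoch (Cmul (Cmul q k) (Cpow q (J + j))) q 1)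
      by (unfold J; simpl; rewrite Cpow_add; field).
    apply Hb3.
  - apply Rlt_le, Rdiv_lt_0_compat; apply Rmult_lt_0_compat; auto.
  - pose proof qpoch_x_neq0. apply Cnorm_div_ge.
    + apply Cmul_neq0; auto. apply qpoch_shift_neq0; auto.
    + split. apply Rlt_le, Rmult_lt_0_compat; auto.
      apply Cnorm_mul_ge; split; auto; lra.
    + apply Cnorm_mul_le; apply qpoch_norm_le; auto using Rle_refl.
      apply Cnorm_mul_pow_le. lra.
Qed.

Lemma inner_term_bound : exists C, forall j p, Cnorm (inner_term j p) <= C * Cnorm x ^ p.
Proof.
  destruct (qpoch_norm_lower_bound q q hq qpoch_qq_neq0) as [c1 [Hc1 Hb1]].
  destruct (qpoch_shift_norm_lower_bound _ q hq hqa) as [c2 [Hc2 Hb2]].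
  destruct (qpoch_shift_norm_lower_bound _ q hq hqkz) as [c3 [Hc3 Hb3]].
  destruct (qpoch_shift_norm_lower_bound _ q hq hqk) as [c4 [Hc4 Hb4]].
  exists ((1 + Cnorm k) * ((qpoch_ub k q * qpoch_ub (Cdiv k a) q * qpoch_ub z q * qpoch_ub Cone q)
                           / (c1 * c2 * c3 * c4))).
  intros j p. unfold inner_term, vwp_term. set (J := S j).
  rewrite (qpoch_congr (Cmul (Cmul k (Cpow q J)) (Cpow q J)) (Cmul k (Cpow q (J + J))))
    by (rewrite Cpow_add; field).
  rewrite (qpoch_congr (Cmul (Cmul (Cmul z (Cpow q J)) x) (Cpow q J)) (Cmul (Cmul q a) (Cpow q (J + J))))
    by (unfold x; rewrite Cpow_add; field; auto).
  rewrite (qpoch_congr (Cmul (Cmul (Cdiv k a) x) (Cpow q J)) (Cmul (Cdiv (Cmul q k) z) (Cpow q J)))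
    by (unfold x; field; auto).
  rewrite (qpoch_congr (Cmul (Cmul (Cdiv k a) (Cmul z (Cpow q J))) x) (Cmul (Cmul q k) (Cpow q J)))
    by (unfold x; field; auto).
  rewrite <- Cnorm_pow. apply Cnorm_mul_le; [apply Cnorm_mul_le|apply Rle_refl].
  - eapply Rle_trans. apply Cnorm_sub_le. rewrite Cnorm_one. apply Rplus_le_compat_l.
    repeat (eapply Rle_trans; [apply Cnorm_mul_pow_le; lra|]). apply Rle_refl.
  - apply Cnorm_div_le.
    + repeat apply Cmul_neq0; auto using qpoch_qq_neq0; apply qpoch_shift_neq0; auto.
    + repeat apply Cnorm_mul_le; apply qpoch_norm_le; auto using Rle_refl.
      * apply Cnorm_mul_pow_le. lra.
      * apply Cnorm_mul_pow_le. lra.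
      * rewrite Cnorm_one. apply Cnorm_pow_le1. lra.
    + split. repeat apply Rmult_lt_0_compat; auto.
      repeat (apply Cnorm_mul_ge || split); auto; repeat apply Rmult_le_pos; lra.
Qed.

Lemma inner_value_neq0 j : inner_value j <> Czero.
Proof.
  destruct inner_value_lower_bound as [c [Hc Hb]]. intro E.
  specialize (Hb j). rewrite E, Cnorm_zero in Hb. lra.
Qed.

Lemma inner_sum_lim j :
  Cseq_lim (Cpartial (fun p => Cmul (beta_coef (j + p)) (bailey_kernel (S (j + p)) (S j))))
           (alpha_coef j).
Proof.
  assert (Hsum : Cseq_lim (Cpartial (inner_term j)) (inner_value j)).
  { apply vwp_summation; auto.
    - unfold x. field. auto.
    - intro n. rewrite (qpoch_congr (Cmul (Cmul (Cdiv k a) (Cmul z (Cpow q (S j)))) x)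
                                   (Cmul (Cmul q k) (Cpow q (S j)))) by (unfold x; field; auto).
      apply qpoch_shift_neq0; auto.
    - intro i. replace (Cmul (Cmul k (Cpow q (S j))) (Cpow q i))
        with (Cmul (Cmul q k) (Cpow q (j + i))) by (rewrite !Cpow_add, Cpow_S; field).
      apply qpoch_factor_neq0; auto.
    - intro n. rewrite (qpoch_congr (Cmul (Cmul z (Cpow q (S j))) x) (Cmul (Cmul q a) (Cpow q (S j))))
        by (unfold x; field; auto).
      apply qpoch_shift_neq0; auto.
    - intro n. rewrite (qpoch_congr (Cmul (Cdiv k a) x) (Cdiv (Cmul q k) z)) by (unfold x; field; auto).
      auto. }
  replace (alpha_coef j) with (Cmul (Cdiv (alpha_coef j) (inner_value j)) (inner_value j))
    by (field; apply inner_value_neq0).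
  apply (Cseq_lim_ext (fun n => Cmul (Cdiv (alpha_coef j) (inner_value j)) (Cpartial (inner_term j) n))).
  - intro n. rewrite <- Cpartial_scal. apply Cpartial_ext. intros p _.
    symmetry. apply beta_coef_kernel.
  - apply Cseq_lim_scal. exact Hsum.
Qed.

Lemma inner_sum_bound : exists C, 0 <= C /\ forall j p,
  Cnorm (Cmul (beta_coef (j + p)) (bailey_kernel (S (j + p)) (S j)))
  <= C * Cnorm (alpha_coef j) * Cnorm x ^ p.
Proof.
  destruct inner_term_bound as [Ct HCt]. destruct inner_value_lower_bound as [c [Hc Hcb]].
  assert (HCt0 : 0 <= Ct).
  { pose proof (HCt 0%nat 0%nat) as h. rewrite pow_O, Rmult_1_r in h.
    eapply Rle_trans; [apply Cnorm_ge0|exact h]. }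
  exists (Ct / c). split. { apply Rmult_le_pos; auto. left. apply Rinv_0_lt_compat. lra. }
  intros j p. rewrite beta_coef_kernel.
  replace (Ct / c * Cnorm (alpha_coef j) * Cnorm x ^ p)
    with (Cnorm (alpha_coef j) / c * (Ct * Cnorm x ^ p)) by (field; lra).
  apply Cnorm_mul_le; auto.
  apply Cnorm_div_le; auto using inner_value_neq0, Rle_refl.
Qed.

Lemma beta_coef_expansion (alpha beta : nat -> CC) m :
  WP_Bailey_pair a k q alpha beta ->
  Cmul (beta_coef m) (beta (S m))
  = Cadd (Cmul (beta_coef m) (bailey_kernel (S m) 0))
         (Cpartial (fun j => Cmul (Cmul (beta_coef (j + (m - j))%nat)
                                        (bailey_kernel (S (j + (m - j))) (S j)))
                                  (alpha (S j))) (S m)).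
Proof.
  intros [Ha0 [_ Hb]].
  transitivity (Cadd (Cmul (beta_coef m) (bailey_kernel (S m) 0))
    (Cmul (beta_coef m) (Cpartial (fun j => Cmul (bailey_kernel (S m) (S j)) (alpha (S j))) (S m)))).
  { rewrite (Hb (S m)), Cpartial_shift, Ha0 by lia. unfold bailey_kernel. cbv beta. ring. }
  f_equal. rewrite <- Cpartial_scal. apply Cpartial_ext. intros j Hj.
  replace (j + (m - j))%nat with m by lia. ring.
Qed.

Lemma wp_bailey_diagonal_sums (alpha beta : nat -> CC) :
  WP_Bailey_pair a k q alpha beta ->
  Cabs_conv (fun m => Cmul (alpha_coef m) (alpha (S m))) ->
  Cseq_lim (fun N => Csub (Csub (Cpartial (fun m => Cmul (beta_coef m) (beta (S m))) N)
                                (Cpartial (fun m => Cmul (alpha_coef m) (alpha (S m))) N))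
                          (Cpartial (fun m => Cmul (beta_coef m) (bailey_kernel (S m) 0)) N))
           Czero.
Proof.
  intros HWP Habs. destruct inner_sum_bound as [C [HC HCb]].
  eapply Cseq_lim_ext;
    [|apply (Cseq_lim_diagonal_sums
               (fun j p => Cmul (beta_coef (j + p)) (bailey_kernel (S (j + p)) (S j)))
               alpha_coef (fun j => alpha (S j)) C (Cnorm x)); auto].
  - intro N. cbv beta.
    rewrite (Cpartial_ext (fun m => Cmul (beta_coef m) (beta (S m))) _ N
               (fun m _ => beta_coef_expansion alpha beta m HWP)), Cpartial_add.
    ring.
  - split; auto using Cnorm_ge0.
  - exact inner_sum_lim.
Qed.

End WPBailey.

Lemma qpoch_pm_sqrt s k q n : Cmul s s = k ->
  Cmul (Cmul (qpoch (Cmul q s) q n) (qpoch (Copp (Cmul q s)) q n)) (Csub Cone k)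
  = Cmul (Cmul (qpoch s q n) (qpoch (Copp s) q n))
         (Csub Cone (Cmul k (Cmul (Cpow q n) (Cpow q n)))).
Proof.
  intros <-. induction n as [|n IH].
  - simpl. field.
  - rewrite !qpoch_S, Cpow_S.
    transitivity (Cmul (Cmul (Cmul (qpoch (Cmul q s) q n) (qpoch (Copp (Cmul q s)) q n))
                             (Csub Cone (Cmul s s)))
      (Cmul (Csub Cone (Cmul (Cmul q s) (Cpow q n)))
            (Csub Cone (Cmul (Copp (Cmul q s)) (Cpow q n))))); [field|].
    rewrite IH. field.
Qed.

Definition wp_lhs_coef (a k q z s : CC) (m : nat) : CC :=
  Cmul (Cdiv (Cmul (Cmul (Cmul (qpoch (Cmul q s) q (S m)) (qpoch (Copp (Cmul q s)) q (S m)))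
                         (qpoch z q (S m))) (qpoch q q m))
             (Cmul (Cmul (Cmul (qpoch s q (S m)) (qpoch (Copp s) q (S m)))
                         (qpoch (Cmul q k) q (S m))) (qpoch (Cdiv (Cmul q k) z) q (S m))))
       (Cpow (Cdiv (Cmul q a) z) (S m)).

Definition wp_rhs_term (a k q z s : CC) (m : nat) : CC :=
  Cmul (Cdiv (Cmul (Cmul (Cmul (Cmul (qpoch (Cmul q s) q (S m)) (qpoch (Copp (Cmul q s)) q (S m)))
                               (qpoch k q (S m))) (qpoch z q (S m))) (qpoch (Cdiv k a) q (S m)))
             (Cmul (Cmul (Cmul (Cmul (Cmul (qpoch s q (S m)) (qpoch (Copp s) q (S m)))
                                     (qpoch (Cmul q k) q (S m))) (qpoch (Cdiv (Cmul q k) z) q (S m)))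
                         (qpoch (Cmul q a) q (S m)))
                   (Csub Cone (Cpow q (S m)))))
       (Cpow (Cdiv (Cmul q a) z) (S m)).

Section SquareRoot.

Variables a k q z s : CC.
Hypothesis hs : Cmul s s = k.
Hypothesis hsq : forall n, qpoch s q n <> Czero.
Hypothesis hmsq : forall n, qpoch (Copp s) q n <> Czero.
Hypothesis hqk : forall n, qpoch (Cmul q k) q n <> Czero.
Hypothesis hqkz : forall n, qpoch (Cdiv (Cmul q k) z) q n <> Czero.

Lemma one_sub_sqr_neq0 : Csub Cone k <> Czero.
Proof.
  intro E. apply (Cmul_neq0 _ _ (hsq 1%nat) (hmsq 1%nat)). simpl.
  rewrite <- hs in E. rewrite <- E. field.
Qed.

Lemma wp_lhs_coef_eq m : wp_lhs_coef a k q z s m = beta_coef a k q z m.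
Proof.
  pose proof one_sub_sqr_neq0. unfold wp_lhs_coef, beta_coef.
  replace (Cmul (qpoch (Cmul q s) q (S m)) (qpoch (Copp (Cmul q s)) q (S m)))
    with (Cdiv (Cmul (Cmul (qpoch s q (S m)) (qpoch (Copp s) q (S m)))
                     (Csub Cone (Cmul k (Cmul (Cpow q (S m)) (Cpow q (S m))))))
               (Csub Cone k))
    by (rewrite <- qpoch_pm_sqrt by auto; field; auto).
  field. repeat split; auto.
Qed.

Lemma wp_rhs_term_eq m :
  Cnorm q < 1 -> (forall n, qpoch (Cmul q a) q n <> Czero) ->
  wp_rhs_term a k q z s m = Cmul (beta_coef a k q z m) (bailey_kernel a k q (S m) 0).
Proof.
  intros hq hqa. pose proof one_sub_sqr_neq0.
  pose proof (qpoch_neq0_small q q hq hq m) as Hqm.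
  pose proof (qpoch_factor_neq0 q q (qpoch_neq0_small q q hq hq) m).
  unfold wp_rhs_term, beta_coef, bailey_kernel.
  rewrite Nat.sub_0_r, Nat.add_0_r, (qpoch_congr (Cmul a q) (Cmul q a)), (qpoch_S q q m) by field.
  replace (Cmul (qpoch (Cmul q s) q (S m)) (qpoch (Copp (Cmul q s)) q (S m)))
    with (Cdiv (Cmul (Cmul (qpoch s q (S m)) (qpoch (Copp s) q (S m)))
                     (Csub Cone (Cmul k (Cmul (Cpow q (S m)) (Cpow q (S m))))))
               (Csub Cone k))
    by (rewrite <- qpoch_pm_sqrt by auto; field; auto).
  rewrite Cpow_S. field. change (R1, R0) with Cone. repeat split; auto.
Qed.

End SquareRoot.

Lemma wp_partial_sums_difference (a k q z s : CC) (alpha beta : nat -> CC)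
  (hq : Cnorm q < 1) (hWP : WP_Bailey_pair a k q alpha beta) (hs : Cmul s s = k)
  (hz : Cnorm (Cmul q a) < Cnorm z) (ha0 : a <> Czero)
  (hd1 : forall n, qpoch s q n <> Czero)
  (hd2 : forall n, qpoch (Copp s) q n <> Czero)
  (hd3 : forall n, qpoch (Cmul q k) q n <> Czero)
  (hd4 : forall n, qpoch (Cdiv (Cmul q k) z) q n <> Czero)
  (hd5 : forall n, qpoch (Cmul q a) q n <> Czero) :
  Cabs_conv (fun m => Cmul (alpha_coef a q z m) (alpha (S m))) ->
  Cseq_lim (fun N => Csub (Csub (Cpartial (fun m => Cmul (wp_lhs_coef a k q z s m) (beta (S m))) N)
                                (Cpartial (fun m => Cmul (alpha_coef a q z m) (alpha (S m))) N))
                          (Cpartial (wp_rhs_term a k q z s) N))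
           Czero.
Proof.
  intro Habs.
  assert (Hz0 : z <> Czero).
  { intro E. rewrite E, Cnorm_zero in hz. pose proof (Cnorm_ge0 (Cmul q a)). lra. }
  destruct (Req_dec (Cnorm q) 0) as [Hq0|Hq0].
  - apply Cnorm_eq0 in Hq0.
    (* For q = 0 every term carries a factor (q a / z)^(m+1) = 0. *)
    assert (Hx : forall n, Cpow (Cdiv (Cmul q a) z) (S n) = Czero)
      by (intro; rewrite Hq0, Cpow_S; unfold Cdiv; ring).
    apply (Cseq_lim_eventually_const _ _ 0%nat). intros N _.
    rewrite (Cpartial_eq0 (fun m => Cmul (wp_lhs_coef a k q z s m) (beta (S m)))),
      (Cpartial_eq0 (fun m => Cmul (alpha_coef a q z m) (alpha (S m)))),
      (Cpartial_eq0 (wp_rhs_term a k q z s)); [field| ..];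
      intro m; unfold wp_lhs_coef, alpha_coef, wp_rhs_term; rewrite Hx; unfold Cdiv; ring.
  - assert (hx : Cnorm (Cdiv (Cmul q a) z) < 1).
    { rewrite Cnorm_div by auto. apply Rmult_lt_reg_r with (Cnorm z). apply Cnorm_gt0; auto.
      unfold Rdiv. rewrite Rmult_assoc, Rinv_l by (apply Rgt_not_eq, Cnorm_gt0; auto). lra. }
    assert (hq0 : q <> Czero) by (intro E; apply Hq0; rewrite E; apply Cnorm_zero).
    eapply Cseq_lim_ext; [|apply (wp_bailey_diagonal_sums a k q z); eauto using one_sub_sqr_neq0].
    intro N. cbv beta.
    rewrite (Cpartial_ext (fun m => Cmul (wp_lhs_coef a k q z s m) (beta (S m)))
                          (fun m => Cmul (beta_coef a k q z m) (beta (S m))))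
      by (intros; rewrite wp_lhs_coef_eq; auto).
    rewrite (Cpartial_ext (wp_rhs_term a k q z s)
                          (fun m => Cmul (beta_coef a k q z m) (bailey_kernel a k q (S m) 0)))
      by (intros; apply wp_rhs_term_eq; auto).
    reflexivity.
Qed.

Theorem lemma2p1 (a k q z s : CC) (alpha beta : nat -> CC)
  (hq : Cnorm q < 1)
  (hWP : WP_Bailey_pair a k q alpha beta)
  (hs : Cmul s s = k)
  (hz : Cnorm (Cmul q a) < Cnorm z)
  (ha0 : a <> Czero)
  (hd1 : forall n, qpoch s q n <> Czero)
  (hd2 : forall n, qpoch (Copp s) q n <> Czero)
  (hd3 : forall n, qpoch (Cmul q k) q n <> Czero)
  (hd4 : forall n, qpoch (Cdiv (Cmul q k) z) q n <> Czero)
  (hd5 : forall n, qpoch (Cmul q a) q n <> Czero)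
  (hd6 : forall n, qpoch (Cdiv (Cmul q a) z) q n <> Czero) :
  let x := Cdiv (Cmul q a) z in
  let f1 := fun m : nat => let n := S m in
    Cmul (Cmul (Cdiv (Cmul (Cmul (Cmul (qpoch (Cmul q s) q n) (qpoch (Copp (Cmul q s)) q n))
                                   (qpoch z q n)) (qpoch q q m))
                     (Cmul (Cmul (Cmul (qpoch s q n) (qpoch (Copp s) q n))
                                 (qpoch (Cmul q k) q n)) (qpoch (Cdiv (Cmul q k) z) q n)))
               (Cpow x n)) (beta n) in
  let f2 := fun m : nat => let n := S m in
    Cmul (Cmul (Cdiv (Cmul (qpoch z q n) (qpoch q q m))
                     (Cmul (qpoch (Cmul q a) q n) (qpoch (Cdiv (Cmul q a) z) q n)))
               (Cpow x n)) (alpha n) in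
  let f3 := fun m : nat => let n := S m in
    Cmul (Cdiv (Cmul (Cmul (Cmul (Cmul (qpoch (Cmul q s) q n) (qpoch (Copp (Cmul q s)) q n))
                                  (qpoch k q n)) (qpoch z q n)) (qpoch (Cdiv k a) q n))
               (Cmul (Cmul (Cmul (Cmul (Cmul (qpoch s q n) (qpoch (Copp s) q n))
                                       (qpoch (Cmul q k) q n)) (qpoch (Cdiv (Cmul q k) z) q n))
                           (qpoch (Cmul q a) q n))
                     (Csub Cone (Cpow q n))))
         (Cpow x n) in
  Cabs_conv f1 -> Cabs_conv f2 -> Cabs_conv f3 ->
  forall l1 l2 l3 : CC,
    Cseries_lim f1 l1 -> Cseries_lim f2 l2 -> Cseries_lim f3 l3 ->
    Csub l1 l2 = l3.
Proof.
  intros x f1 f2 f3 _ Habs _ l1 l2 l3 L1 L2 L3.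
  assert (Hdiff : Csub (Csub l1 l2) l3 = Czero).
  { apply (Cseq_lim_unique (fun N => Csub (Csub (Cpartial f1 N) (Cpartial f2 N)) (Cpartial f3 N))).
    - apply Cseq_lim_sub; [apply Cseq_lim_sub|]; assumption.
    - exact (wp_partial_sums_difference a k q z s alpha beta hq hWP hs hz ha0
               hd1 hd2 hd3 hd4 hd5 Habs). }
  replace l3 with (Cadd (Csub (Csub l1 l2) l3) l3) by (rewrite Hdiff; field). field.
Qed.
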